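(* Let $<$ be an ordering of $\mathbb{F}_m$ preserved by the Artin automorphism of $\alpha\in B_m$, and $<'$ an ordering of $\mathbb{F}_n$ preserved by the Artin automorphism of $\beta\in B_n$. Let $\prec$ be the ordering of $\mathbb{F}_m*\mathbb{F}_n\cong\mathbb{F}_{m+n}$ constructed from $(\mathbb{F}_m,<)$ and $(\mathbb{F}_n,<')$ as in the context. Then the Artin automorphism of $\alpha\otimes\beta\in B_{m+n}$ preserves $\prec$.
   Context: $B_n$ is the braid group with generators $\sigma_1,\dots,\sigma_{n-1}$; the Artin representation $B_n\to\mathrm{Aut}(\mathbb{F}_n)$ ($\mathbb{F}_n$ free on $x_1,\dots,x_n$) sends $\sigma_i$ to $x_i\mapsto x_ix_{i+1}x_i^{-1}$, $x_{i+1}\mapsto x_i$, $x_j\mapsto x_j$ otherwise. Orderings are strict total orders invariant under left and right multiplication. $\alpha\otimes\beta\in B_{m+n}$ is the side-by-side braid, image of $(\alpha,\beta)$ under $B_m\times B_n\to B_{m+n}$, $\sigma_i\mapsto\sigma_i$ (first factor), $\sigma_j\mapsto\sigma_{m+j}$ (second factor). Identify $\mathbb{F}_m*\mathbb{F}_n$ with $\mathbb{F}_{m+n}$ by sending the generators of $\mathbb{F}_m$ to $x_1,\dots,x_m$ and those of $\mathbb{F}_n$ to $x_{m+1},\dots,x_{m+n}$. Construction of $\prec$ on $F*G$ from orderings $<_F,<_G$: order $F\times G$ lexicographically ($(f,g)<(f',g')$ iff $f<_Ff'$, or $f=f'$ and $g<_Gg'$); in $R=\mathbb{Z}(F\times G)$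 a nonzero element is positive if the coefficient of its largest group element is a positive integer; $\rho\colon F*G\to M_2(R[t])$ is the injective homomorphism with $\rho(f)=\begin{pmatrix} f&(f-1)t\\0&1\end{pmatrix}$, $\rho(g)=\begin{pmatrix}1&0\\(g-1)t&g\end{pmatrix}$; order matrix positions $(1,1)$, $(2,2)$, then the off-diagonal ones in a fixed order; a nonzero $M=\sum_iM_it^i$ is positive if for the least $n$ with $M_n\ne0$ the first nonzero entry of $M_n$ is positive in $R$; $x\prec y$ iff $\rho(y)-\rho(x)$ is positive. *)

From HB Require Import structures.
From mathcomp Require Import all_boot all_order all_algebra.
Set Implicit Arguments. Unset Strict Implicit. Unset Printing Implicit Defensive.
Import Order.TTheory GRing.Theory Num.Theory.

(* Free group F_n on x_0, ..., x_{n-1} (0-indexed; x_k is the paper's  *)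
(* x_{k+1}), as the type of reduced words.  A letter (k, b) stands for *)
(* x_k if b = false and x_k^{-1} if b = true.                          *)
Definition letter := (nat * bool)%type.

Definition cancels (a b : letter) : bool := (a.1 == b.1) && (a.2 != b.2).

Fixpoint nocancel (w : seq letter) : bool :=
  match w with
  | a :: ((b :: _) as t) => ~~ cancels a b && nocancel t
  | _ => true
  end.

Definition reduced (n : nat) (w : seq letter) : bool :=
  all (fun a => a.1 < n) w && nocancel w.

Record FG (n : nat) := mkFG { fgw : seq letter; fgP : reduced n fgw }.

HB.instance Definition _ n := [isSub for @fgw n].
HB.instance Definition _ n := [Equality of FG n by <:].

Definition push (a : letter) (w : seq letter) : seq letter :=
  match w with
  | b :: t => if cancels a b then t else a :: w
  | [::] => [:: a]
  end.

Definition normW (n : nat) (w : seq letter) : seq letter :=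
  foldr push [::] (filter (fun a => a.1 < n) w).

Lemma push_reduced n a v : a.1 < n -> reduced n v -> reduced n (push a v).
Proof.
rewrite /reduced => an; case: v => [|b t] /=; first by rewrite an.
case/andP=> /andP [bn tn] nc.
case: ifP => [_|nab] /=.
  by case: t tn nc => [|c t] //= /andP [-> ->] /andP [_ ->].
by rewrite an bn tn /= nab nc.
Qed.

Lemma normW_reduced n w : reduced n (normW n w).
Proof.
rewrite /normW; elim: w => [|a w IH] //=.
by case: ifP => // an; apply: push_reduced.
Qed.

(* the element of F_n represented by an arbitrary word (letters with index
   >= n are discarded; they never occur in our uses) *)
Definition normFG (n : nat) (w : seq letter) : FG n := mkFG (normW_reduced n w).

Definition fg_one (n : nat) : FG n := normFG n [::].
Definition fg_mul (n : nat) (x y : FG n) : FG n := normFG n (fgw x ++ fgw y).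

Definition invW (w : seq letter) : seq letter := rev (map (fun a => (a.1, ~~ a.2)) w).

(* Artin representation.  A braid in B_n is given by a word in the     *)
(* generators sigma_i^{+-1}: a letter (i, false) is sigma_i, (i, true) *)
(* is sigma_i^{-1} (0-indexed: sigma_i acts on x_i, x_{i+1}).          *)
Definition braid_word (n : nat) (b : seq (nat * bool)) : Prop :=
  all (fun s => s.1.+1 < n) b.

Definition sigma_img (s : nat * bool) (j : nat) : seq letter :=
  let i := s.1 in
  if ~~ s.2 then
    if j == i then [:: (i, false); (i.+1, false); (i, true)]
    else if j == i.+1 then [:: (i, false)]
    else [:: (j, false)]
  else
    if j == i then [:: (i.+1, false)]
    else if j == i.+1 then [:: (i.+1, true); (i, false); (i.+1, false)]
    else [:: (j, false)].

Definition substW (img : nat -> seq letter) (w : seq letter) : seq letter :=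
  flatten (map (fun a => if a.2 then invW (img a.1) else img a.1) w).

Definition artin_gen (n : nat) (s : nat * bool) (x : FG n) : FG n :=
  normFG n (substW (sigma_img s) (fgw x)).

Arguments artin_gen n s x : clear implicits.

(* the Artin automorphism of the braid s_1 s_2 ... s_k is
   artin_gen s_1 \o artin_gen s_2 \o ... \o artin_gen s_k
   (B_n -> Aut(F_n) is a homomorphism) *)
Definition artin (n : nat) (b : seq (nat * bool)) : FG n -> FG n :=
  foldr (fun s (f : FG n -> FG n) x => artin_gen n s (f x)) id b.

Arguments artin n b _ : clear implicits.

Definition braid_tensor (m : nat) (a b : seq (nat * bool)) : seq (nat * bool) :=
  a ++ map (fun s => (m + s.1, s.2)) b.

Definition bi_ordering (T : Type) (mul : T -> T -> T) (lt : T -> T -> Prop) : Prop :=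
  [/\ (forall x, ~ lt x x),
      (forall x y z, lt x y -> lt y z -> lt x z),
      (forall x y, x <> y -> lt x y \/ lt y x) &
      (forall x y z, lt x y -> lt (mul z x) (mul z y) /\ lt (mul x z) (mul y z))].

Definition preserves (T : Type) (phi : T -> T) (lt : T -> T -> Prop) : Prop :=
  forall x y, lt x y <-> lt (phi x) (phi y).

Section Construction.
Variables (m n : nat) (ltF : FG m -> FG m -> Prop) (ltG : FG n -> FG n -> Prop).

Definition P := (FG m * FG n)%type.

Definition P_mul (p q : P) : P := (fg_mul p.1 q.1, fg_mul p.2 q.2).
Definition P_one : P := (fg_one m, fg_one n).

Definition lexlt (p q : P) : Prop :=
  ltF p.1 q.1 \/ (p.1 = q.1 /\ ltG p.2 q.2).

(* An element of R = Z(F x G) is a function P -> int (of finite support);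
   positive: coefficient of its largest group element is positive. *)
Definition R_zero (r : P -> int) : Prop := forall g, r g = 0.
Definition R_pos (r : P -> int) : Prop :=
  exists g, (0 < r g)%R /\ forall h, lexlt g h -> r h = 0.

(* Elements of M_2(R[t]) are represented as formal finite sums of
   monomials c * g * t^k * E_{ij}, encoded as (c, g, k, i, j) with
   c : int, g : P, k : nat, i j : bool (false = index 1, true = index 2). *)
Definition mono := (int * P * nat * bool * bool)%type.
Definition MT := seq mono.

Definition mcoef (M : MT) (k : nat) (i j : bool) (g : P) : int :=
  \sum_(x <- M | [&& x.1.1.2 == k, x.1.2 == i & x.2 == j] && (x.1.1.1.2 == g)) x.1.1.1.1.

Definition M_mul (A B : MT) : MT :=
  flatten [seq [seq (x.1.1.1.1 * y.1.1.1.1, P_mul x.1.1.1.2 y.1.1.1.2,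
                     x.1.1.2 + y.1.1.2, x.1.2, y.2)%R
               | y <- B & y.1.2 == x.2] | x <- A].

Definition M_sub (A B : MT) : MT :=
  A ++ [seq (- x.1.1.1.1, x.1.1.1.2, x.1.1.2, x.1.2, x.2)%R | x <- B].

Definition M_id : MT := [:: (1%R, P_one, 0, false, false); (1%R, P_one, 0, true, true)].

(* rho on a letter of F_{m+n} = F_m * F_n :
   rho(f) = [[f, (f-1)t],[0,1]],  rho(g) = [[1,0],[(g-1)t, g]] *)
Definition rho_letter (a : letter) : MT :=
  if a.1 < m then
    let f := (normFG m [:: a], fg_one n) in
    [:: (1%R, f, 0, false, false); (1%R, f, 1, false, true);
        ((-1)%R, P_one, 1, false, true); (1%R, P_one, 0, true, true)]
  else
    let g := (fg_one m, normFG n [:: (a.1 - m, a.2)]) in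
    [:: (1%R, P_one, 0, false, false); (1%R, g, 1, true, false);
        ((-1)%R, P_one, 1, true, false); (1%R, g, 0, true, true)].

Definition rho (x : FG (m + n)) : MT :=
  foldr (fun a M => M_mul (rho_letter a) M) M_id (fgw x).

(* positivity in M_2(R[t]): for the least k with M_k <> 0, the first
   nonzero entry of M_k, in the order (1,1), (2,2), then the two
   off-diagonal positions in the fixed order given by [ofs]
   (ofs = false: (1,2) then (2,1); ofs = true: (2,1) then (1,2)),
   is positive in R. *)
Definition M_zero_at (M : MT) (k : nat) : Prop :=
  forall i j, R_zero (mcoef M k i j).

Definition M_pos (ofs : bool) (M : MT) : Prop :=
  exists k, (forall k', k' < k -> M_zero_at M k') /\
    let E i j := mcoef M k i j in
    let o1 := (ofs, ~~ ofs) in let o2 := (~~ ofs, ofs) in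
    [\/ R_pos (E false false),
        R_zero (E false false) /\ R_pos (E true true),
        [/\ R_zero (E false false), R_zero (E true true) & R_pos (E o1.1 o1.2)] |
        [/\ R_zero (E false false), R_zero (E true true), R_zero (E o1.1 o1.2)
          & R_pos (E o2.1 o2.2)]].

Definition prec (ofs : bool) (x y : FG (m + n)) : Prop :=
  M_pos ofs (M_sub (rho y) (rho x)).

End Construction.

From mathcomp Require Import all_boot all_order all_algebra.
From mathcomp Require Import ring.
From Stdlib Require Import Classical_Prop.
Set Implicit Arguments. Unset Strict Implicit. Unset Printing Implicit Defensive.
Import Order.TTheory GRing.Theory Num.Theory.

(* Through F_{m+n} = F_m * F_n the braid alpha (x) beta acts by alpha on the
   letters of F_m and by beta on those of F_n.  Hence rho intertwines it with
   the automorphism alpha x beta of F_m x F_n, acting on the group elements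
   occurring in the coefficients: rho ((alpha (x) beta) x) = (alpha x beta)_* (rho x).
   Both sides are compatible with free reduction and with substitution of words,
   so this reduces to a 2x2 computation on single letters.  Since alpha and beta
   preserve < and <', the map alpha x beta is injective and preserves the
   lexicographic order of F_m x F_n, so it carries the largest group element of
   every entry to the largest one of the image entry, with the same coefficient;
   positivity in M_2(Z(F_m x F_n)[t]) is therefore preserved. *)


Local Notation letter_lt n := (fun a : letter => (a.1 < n)%N).

Definition pushs (u z : seq letter) : seq letter := foldr push z u.

Definition linv (a : letter) : letter := (a.1, ~~ a.2).

Lemma cancels_linv a : cancels a (linv a).
Proof. by rewrite /cancels /= eqxx; case: a.2. Qed.

Lemma cancels_eq_linv a b : cancels a b -> b = linv a.
Proof.
case: a b => [i x] [j y]; rewrite /cancels /linv /= => /andP [/eqP <-].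
by case: x; case: y.
Qed.

Lemma linvK : involutive linv.
Proof. by case=> i x; rewrite /linv negbK. Qed.

Lemma push_pushK a b z : cancels a b -> nocancel z -> push a (push b z) = z.
Proof.
move=> ab; case: z => [|c t] /=; first by rewrite ab.
case: ifP => [bc nc|_ _] /=; last by rewrite ab.
have ca : c = a by rewrite (cancels_eq_linv bc) (cancels_eq_linv ab) linvK.
by subst c; case: t nc => [|d t] //= /andP [/negbTE ->].
Qed.

Section FreeGroup.
Variable n : nat.

Lemma reduced_nocancel w : reduced n w -> nocancel w.
Proof. by case/andP. Qed.

Lemma reduced_letter_lt w : reduced n w -> all (letter_lt n) w.
Proof. by case/andP. Qed.

Lemma reduced_behead a t : reduced n (a :: t) -> reduced n t.
Proof.
rewrite /reduced /= => /andP [/andP [_ ->]].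
by case: t => [|b t] //= /andP [_ ->].
Qed.

Lemma pushs_reduced u z : all (letter_lt n) u -> reduced n z -> reduced n (pushs u z).
Proof.
elim: u => [|a u IH] //= /andP [an un] rz.
by apply: push_reduced => //; apply: IH.
Qed.

Lemma pushs_cat u v z : pushs (u ++ v) z = pushs u (pushs v z).
Proof. exact: foldr_cat. Qed.

Lemma pushs_push a w z : all (letter_lt n) w -> reduced n z ->
  pushs (push a w) z = push a (pushs w z).
Proof.
case: w => [|b t] //= /andP [bn tn] rz.
case: ifP => // ab.
by rewrite push_pushK // reduced_nocancel // pushs_reduced.
Qed.

Lemma pushsA u v z : all (letter_lt n) u -> reduced n v -> reduced n z ->
  pushs (pushs u v) z = pushs u (pushs v z).
Proof.
elim: u => [|a u IH] //= /andP [an un] rv rz.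
by rewrite pushs_push ?IH // reduced_letter_lt // pushs_reduced.
Qed.

Lemma pushs_nil w : reduced n w -> pushs w [::] = w.
Proof.
elim: w => [|a t IH] //= rw.
rewrite IH; last exact: reduced_behead rw.
move: rw; rewrite /reduced /=.
by case: t {IH} => [|b t] //= /andP [_ /andP [/negbTE ->]].
Qed.

Lemma normW_pushs u : all (letter_lt n) u -> normW n u = pushs u [::].
Proof. by move=> un; rewrite /normW (all_filterP un). Qed.

Lemma fgw_inj : injective (@fgw n).
Proof. exact: val_inj. Qed.

Lemma fgw_mul (f g : FG n) : fgw (fg_mul f g) = pushs (fgw f) (fgw g).
Proof.
rewrite /fg_mul /= normW_pushs; last by rewrite all_cat !reduced_letter_lt ?fgP.
by rewrite pushs_cat pushs_nil ?fgP.
Qed.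

Lemma fg_mulA : associative (@fg_mul n).
Proof. by move=> f g h; apply: fgw_inj; rewrite !fgw_mul pushsA ?reduced_letter_lt ?fgP. Qed.

Lemma fg_mul1 : right_id (fg_one n) (@fg_mul n).
Proof. by move=> f; apply: fgw_inj; rewrite fgw_mul pushs_nil ?fgP. Qed.

Lemma fg_1mul : left_id (fg_one n) (@fg_mul n).
Proof. by move=> f; apply: fgw_inj; rewrite fgw_mul. Qed.

Lemma invW_cons a u : invW (a :: u) = invW u ++ [:: linv a].
Proof. by rewrite /invW /= rev_cons cats1. Qed.

Lemma invWK : involutive invW.
Proof.
move=> u; rewrite /invW map_rev revK -map_comp map_id_in //.
by case=> i x _ /=; rewrite negbK.
Qed.

Lemma all_invW u : all (letter_lt n) u -> all (letter_lt n) (invW u).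
Proof. by rewrite /invW all_rev all_map. Qed.

Lemma pushs_invW u z : all (letter_lt n) u -> reduced n z ->
  pushs u (pushs (invW u) z) = z.
Proof.
elim: u z => [|a u IH] z //= /andP [an un] rz.
rewrite invW_cons pushs_cat /= IH //; last exact: push_reduced.
by rewrite push_pushK ?cancels_linv ?reduced_nocancel.
Qed.

End FreeGroup.

Section Substitution.
Variables (n : nat) (img : nat -> seq letter).
Hypothesis img_lt : forall j, j < n -> all (letter_lt n) (img j).

Definition subst_letter (a : letter) : seq letter :=
  if a.2 then invW (img a.1) else img a.1.

Lemma substW_cons a w : substW img (a :: w) = subst_letter a ++ substW img w.
Proof. by []. Qed.

Lemma substW_cat u w : substW img (u ++ w) = substW img u ++ substW img w.
Proof. by rewrite /substW map_cat flatten_cat. Qed.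

Lemma subst_letter_lt a : a.1 < n -> all (letter_lt n) (subst_letter a).
Proof. by move=> an; rewrite /subst_letter; case: a.2; rewrite ?all_invW ?img_lt. Qed.

Lemma substW_lt w : all (letter_lt n) w -> all (letter_lt n) (substW img w).
Proof.
elim: w => [|a w IH] //= /andP [an wn].
by rewrite substW_cons all_cat subst_letter_lt // IH.
Qed.

Lemma subst_letter_linv a : subst_letter (linv a) = invW (subst_letter a).
Proof. by rewrite /subst_letter /linv /=; case: a.2; rewrite ?invWK. Qed.

Lemma pushs_substW_push a w z : a.1 < n -> reduced n w -> reduced n z ->
  pushs (substW img (push a w)) z = pushs (substW img (a :: w)) z.
Proof.
move=> an rw rz; case: w rw => [|b t] //= rw.
case: ifP => // ab.
rewrite !substW_cons !pushs_cat (cancels_eq_linv ab) subst_letter_linv (pushs_invW (n := n)) //.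
  exact: subst_letter_lt.
by rewrite pushs_reduced // substW_lt // reduced_letter_lt // (reduced_behead rw).
Qed.

Lemma pushs_substW_pushs u w z : all (letter_lt n) u -> reduced n w -> reduced n z ->
  pushs (substW img (pushs u w)) z = pushs (substW img (u ++ w)) z.
Proof.
elim: u => [|a u IH] //= /andP [an un] rw rz.
rewrite pushs_substW_push ?pushs_reduced //.
by rewrite !substW_cons !pushs_cat IH.
Qed.

Definition substFG (f : FG n) : FG n := normFG n (substW img (fgw f)).

Lemma fgw_substFG f : fgw (substFG f) = pushs (substW img (fgw f)) [::].
Proof. by rewrite /= normW_pushs // substW_lt // reduced_letter_lt ?fgP. Qed.

Lemma substFG_mul f g : substFG (fg_mul f g) = fg_mul (substFG f) (substFG g).
Proof.
apply: fgw_inj.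
rewrite fgw_mul !fgw_substFG fgw_mul pushs_substW_pushs ?reduced_letter_lt ?fgP //.
by rewrite substW_cat pushs_cat (pushsA (n := n)) ?pushs_reduced ?substW_lt ?reduced_letter_lt ?fgP //.
Qed.

End Substitution.

Local Open Scope ring_scope.
Arguments fg_mul : simpl never.
Arguments normFG : simpl never.

Section FormalMatrices.
Variables m n : nat.
Local Notation P := (P m n).
Local Notation mono := (mono m n).
Local Notation MT := (MT m n).

Definition mkey := (nat * bool * bool * P)%type.
Definition mkey_of (x : mono) : mkey := (x.1.1.2, x.1.2, x.2, x.1.1.1.2).

Definition M_coef (M : MT) (K : mkey) : int :=
  \sum_(x <- M) (if mkey_of x == K then x.1.1.1.1 else 0).

Definition M_eq (A B : MT) := forall K, M_coef A K = M_coef B K.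

Lemma M_eq_refl A : M_eq A A. Proof. by []. Qed.
Lemma M_eq_sym A B : M_eq A B -> M_eq B A. Proof. by move=> h K. Qed.
Lemma M_eq_trans A B C : M_eq A B -> M_eq B C -> M_eq A C.
Proof. by move=> h1 h2 K; rewrite h1. Qed.

Lemma mcoefE M k i j g : mcoef M k i j g = M_coef M (k, i, j, g).
Proof.
rewrite /mcoef /M_coef big_mkcond; apply: eq_bigr => x _.
by rewrite /mkey_of !xpair_eqE /= !andbA.
Qed.

Lemma sum_mkey_of (B : MT) (S : seq mkey) (h : mkey -> int) :
  uniq S -> {subset [seq mkey_of y | y <- B] <= S} ->
  \sum_(y <- B) y.1.1.1.1 * h (mkey_of y) = \sum_(K <- S) M_coef B K * h K.
Proof.
move=> uS sub; rewrite /M_coef; under [RHS]eq_bigr do rewrite mulr_suml.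
rewrite exchange_big /= big_seq [RHS]big_seq; apply: eq_bigr => y yB.
have yS : mkey_of y \in S by apply/sub/map_f.
rewrite (big_rem (mkey_of y)) //= eqxx big1_seq ?addr0 // => K /andP [_].
by rewrite mem_rem_uniq // inE eq_sym => /andP [/negbTE -> _]; rewrite mul0r.
Qed.

Lemma M_eq_sum (B B' : MT) (F : mono -> int) (h : mkey -> int) :
  (forall y, F y = y.1.1.1.1 * h (mkey_of y)) -> M_eq B B' ->
  \sum_(y <- B) F y = \sum_(y <- B') F y.
Proof.
move=> Fh e; under eq_bigr do rewrite Fh; under [RHS]eq_bigr do rewrite Fh.
set S := undup [seq mkey_of y | y <- B ++ B'].
rewrite (@sum_mkey_of B S) ?(@sum_mkey_of B' S) ?undup_uniq //; last 2 first.
- by move=> K KB; rewrite mem_undup map_cat mem_cat KB orbT.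
- by move=> K KB; rewrite mem_undup map_cat mem_cat KB.
by apply: eq_bigr => K _; rewrite e.
Qed.

Definition mono_mul (x y : mono) : mono :=
  (x.1.1.1.1 * y.1.1.1.1, P_mul x.1.1.1.2 y.1.1.1.2, (x.1.1.2 + y.1.1.2)%N, x.1.2, y.2).

Lemma big_M_mul A B (F : mono -> int) :
  \sum_(z <- M_mul A B) F z =
  \sum_(x <- A) \sum_(y <- B) (if y.1.2 == x.2 then F (mono_mul x y) else 0).
Proof.
rewrite /M_mul big_flatten /= big_map; apply: eq_bigr => x _.
by rewrite big_map big_filter big_mkcond.
Qed.

Lemma M_eq_mulr A B B' : M_eq B B' -> M_eq (M_mul A B) (M_mul A B').
Proof.
move=> e K; rewrite /M_coef !big_M_mul; apply: eq_bigr => x _.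
apply: (M_eq_sum (h := fun K' => if K'.1.1.2 == x.2 then
  (if ((x.1.1.2 + K'.1.1.1)%N, x.1.2, K'.1.2, P_mul x.1.1.1.2 K'.2) == K
   then x.1.1.1.1 else 0) else 0)) e => y /=.
by case: ifP; rewrite ?mulr0 //; case: ifP; rewrite ?mulr0 // mulrC.
Qed.

Lemma M_eq_mull A A' B : M_eq A A' -> M_eq (M_mul A B) (M_mul A' B).
Proof.
move=> e K; rewrite /M_coef !big_M_mul exchange_big [RHS]exchange_big /=.
apply: eq_bigr => y _.
apply: (M_eq_sum (h := fun K' => if y.1.2 == K'.1.2 then
  (if ((K'.1.1.1 + y.1.1.2)%N, K'.1.1.2, y.2, P_mul K'.2 y.1.1.1.2) == K
   then y.1.1.1.1 else 0) else 0)) e => x /=.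
by case: ifP; rewrite ?mulr0 //; case: ifP; rewrite ?mulr0 // mulrC.
Qed.

Lemma P_mulA : associative (@P_mul m n).
Proof. by move=> p q r; rewrite /P_mul /= !fg_mulA. Qed.

Lemma P_1mul : left_id (P_one m n) (@P_mul m n).
Proof. by case=> f g; rewrite /P_mul /P_one /= !fg_1mul. Qed.

Lemma mono_mulA : associative mono_mul.
Proof. by move=> x y z; rewrite /mono_mul /= mulrA addnA P_mulA. Qed.

Lemma M_mulA A B C : M_eq (M_mul (M_mul A B) C) (M_mul A (M_mul B C)).
Proof.
move=> K; rewrite /M_coef [LHS]big_M_mul [LHS]big_M_mul [RHS]big_M_mul.
apply: eq_bigr => x _; rewrite big_M_mul; apply: eq_bigr => y _ /=.
case: ifP => _; first by apply: eq_bigr => z _; rewrite mono_mulA mulrA.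
by rewrite big1 // => z _; case: ifP.
Qed.

Lemma M_mul1 B : M_eq (M_mul (M_id m n) B) B.
Proof.
move=> K; rewrite /M_coef big_M_mul !big_cons big_nil addr0 -big_split /=.
apply: eq_bigr => -[[[[c g] k] i] j] _.
by case: i; rewrite /mono_mul /= mul1r add0n P_1mul ?addr0 ?add0r.
Qed.

Lemma M_coef_sub A B K : M_coef (M_sub A B) K = M_coef A K - M_coef B K.
Proof.
rewrite /M_coef /M_sub big_cat big_map -sumrN; congr (_ + _).
by apply: eq_bigr => x _; rewrite /mkey_of /=; case: ifP; rewrite ?oppr0.
Qed.

Lemma M_eq_sub A A' B B' : M_eq A A' -> M_eq B B' -> M_eq (M_sub A B) (M_sub A' B').
Proof. by move=> e1 e2 K; rewrite !M_coef_sub e1 e2. Qed.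

Definition M_map (phi : P -> P) (M : MT) : MT :=
  [seq (x.1.1.1.1, phi x.1.1.1.2, x.1.1.2, x.1.2, x.2) | x <- M].

Lemma M_eq_map phi M M' : M_eq M M' -> M_eq (M_map phi M) (M_map phi M').
Proof.
move=> e K; rewrite /M_coef !big_map.
apply: (M_eq_sum (h := fun K' =>
  if (K'.1.1.1, K'.1.1.2, K'.1.2, phi K'.2) == K then 1 else 0)) e => y /=.
by case: ifP; rewrite ?mulr1 ?mulr0.
Qed.

Lemma M_map_mul phi A B : {morph phi : p q / P_mul p q} ->
  M_map phi (M_mul A B) = M_mul (M_map phi A) (M_map phi B).
Proof.
move=> phiM; rewrite /M_mul /M_map map_flatten -!map_comp.
congr flatten; apply: eq_map => x /=.
by rewrite filter_map -!map_comp; apply: eq_map => y /=; rewrite phiM.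
Qed.

Lemma M_map_sub phi A B : M_map phi (M_sub A B) = M_sub (M_map phi A) (M_map phi B).
Proof. by rewrite /M_map /M_sub map_cat -!map_comp. Qed.

Lemma M_map_comp phi psi M : M_map phi (M_map psi M) = M_map (phi \o psi) M.
Proof. by rewrite /M_map -map_comp. Qed.

Lemma M_map_id phi M : phi =1 id -> M_map phi M = M.
Proof.
move=> e; rewrite -[RHS]map_id; apply: eq_map => -[[[[c g] k] i] j].
by rewrite /= e.
Qed.

End FormalMatrices.

Section RhoFactors.
Variables m n : nat.

Definition rhoF (f : FG m) : MT m n :=
  [:: (1, (f, fg_one n), 0%N, false, false); (1, (f, fg_one n), 1%N, false, true);
      (-1, P_one m n, 1%N, false, true); (1, P_one m n, 0%N, true, true)].

Definition rhoG (g : FG n) : MT m n :=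
  [:: (1, P_one m n, 0%N, false, false); (1, (fg_one m, g), 1%N, true, false);
      (-1, P_one m n, 1%N, true, false); (1, (fg_one m, g), 0%N, true, true)].

Lemma if_mulr_nat (b : bool) (c : int) : (if b then c else 0) = c * b%:R.
Proof. by case: b; rewrite ?mulr1 ?mulr0. Qed.

Lemma rhoF_mul f f' : M_eq (M_mul (rhoF f) (rhoF f')) (rhoF (fg_mul f f')).
Proof.
move=> K; rewrite /M_coef big_M_mul !big_cons !big_nil /= /mkey_of /mono_mul /P_mul /=.
rewrite ?fg_mul1 ?fg_1mul !if_mulr_nat; ring.
Qed.

Lemma rhoG_mul g g' : M_eq (M_mul (rhoG g) (rhoG g')) (rhoG (fg_mul g g')).
Proof.
move=> K; rewrite /M_coef big_M_mul !big_cons !big_nil /= /mkey_of /mono_mul /P_mul /=.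
rewrite ?fg_mul1 ?fg_1mul !if_mulr_nat; ring.
Qed.

Lemma rhoF_one : M_eq (rhoF (fg_one m)) (M_id m n).
Proof. by move=> K; rewrite /M_coef !big_cons !big_nil /= /mkey_of /= !if_mulr_nat; ring. Qed.

Lemma rhoG_one : M_eq (rhoG (fg_one n)) (M_id m n).
Proof. by move=> K; rewrite /M_coef !big_cons !big_nil /= /mkey_of /= !if_mulr_nat; ring. Qed.

End RhoFactors.

Lemma fgw_normFG1 N a : (a.1 < N)%N -> fgw (normFG N [:: a]) = [:: a].
Proof. by move=> aN; rewrite /= /normW /= aN. Qed.

Lemma normFG_cons N a u : all (letter_lt N) (a :: u) ->
  normFG N (a :: u) = fg_mul (normFG N [:: a]) (normFG N u).
Proof.
move=> /= /andP [aN uN]; apply: fgw_inj.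
by rewrite fgw_mul fgw_normFG1 //= !normW_pushs //= aN.
Qed.

Definition shift_letter (m : nat) (a : letter) : letter := (m + a.1, a.2)%N.

Section RhoWords.
Variables m n : nat.
Local Notation P := (P m n).
Local Notation MT := (MT m n).
Local Notation rho_letter := (rho_letter m n).

Definition rhoW (w : seq letter) : MT :=
  foldr (fun a M => M_mul (rho_letter a) M) (M_id m n) w.

Lemma rho_letter_low a : (a.1 < m)%N -> rho_letter a = rhoF n (normFG m [:: a]).
Proof. by move=> am; rewrite /rho_letter am. Qed.

Lemma rho_letter_high a : (m <= a.1)%N ->
  rho_letter a = rhoG m (normFG n [:: (a.1 - m, a.2)%N]).
Proof. by move=> ma; rewrite /rho_letter ltnNge ma. Qed.

Lemma rhoW_low u : all (letter_lt m) u -> M_eq (rhoW u) (rhoF n (normFG m u)).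
Proof.
elim: u => [|a u IH] /=; first by move=> _; apply/M_eq_sym/rhoF_one.
move=> /andP [am um]; apply: M_eq_trans (M_eq_mulr _ (IH um)) _.
by rewrite rho_letter_low // [normFG m (a :: u)]normFG_cons /= ?am //; apply: rhoF_mul.
Qed.

Lemma rhoW_high u : all (letter_lt n) u ->
  M_eq (rhoW (map (shift_letter m) u)) (rhoG m (normFG n u)).
Proof.
elim: u => [|[i x] u IH] /=; first by move=> _; apply/M_eq_sym/rhoG_one.
move=> /andP [im um]; apply: M_eq_trans (M_eq_mulr _ (IH um)) _.
rewrite rho_letter_high /shift_letter /= ?leq_addr // addKn.
by rewrite [normFG n (_ :: u)]normFG_cons /= ?im //; apply: rhoG_mul.
Qed.

Lemma rho_letter_linv a : (a.1 < m + n)%N ->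
  M_eq (M_mul (rho_letter a) (rho_letter (linv a))) (M_id m n).
Proof.
move=> amn; have [am|ma] := ltnP a.1 m.
  rewrite !rho_letter_low //; apply: M_eq_trans; first exact: rhoF_mul.
  suff -> : fg_mul (normFG m [:: a]) (normFG m [:: linv a]) = fg_one m by apply: rhoF_one.
  by apply: fgw_inj; rewrite fgw_mul !fgw_normFG1 //= cancels_linv.
rewrite !rho_letter_high //; apply: M_eq_trans; first exact: rhoG_mul.
suff -> : fg_mul (normFG n [:: (a.1 - m, a.2)%N]) (normFG n [:: (a.1 - m, ~~ a.2)%N])
  = fg_one n by apply: rhoG_one.
apply: fgw_inj; rewrite fgw_mul !fgw_normFG1 ?ltn_subLR //=.
by rewrite (cancels_linv (a.1 - m, a.2)%N).
Qed.

Lemma rhoW_push a v : (a.1 < m + n)%N -> M_eq (rhoW (push a v)) (rhoW (a :: v)).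
Proof.
case: v => [|b t] //= amn; case: ifP => [/cancels_eq_linv -> | _] /=; last exact: M_eq_refl.
apply: M_eq_sym; apply: M_eq_trans (M_eq_sym (M_mulA _ _ _)) _.
by apply: M_eq_trans (M_eq_mull _ (rho_letter_linv amn)) _; apply: M_mul1.
Qed.

Lemma rhoW_pushs u v : all (letter_lt (m + n)) u ->
  M_eq (rhoW (pushs u v)) (rhoW (u ++ v)).
Proof.
elim: u => [|a u IH] /=; first by move=> _; apply: M_eq_refl.
case/andP=> an un; apply: M_eq_trans (rhoW_push _ an) _.
exact: M_eq_mulr (IH un).
Qed.

Lemma rhoW_normW u : all (letter_lt (m + n)) u -> M_eq (rhoW (normW (m + n) u)) (rhoW u).
Proof.
by move=> un; rewrite normW_pushs // -[u in M_eq _ (rhoW u)]cats0; apply: rhoW_pushs.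
Qed.

Lemma rhoW_cat u v : M_eq (rhoW (u ++ v)) (M_mul (rhoW u) (rhoW v)).
Proof.
elim: u => [|a u IH] /=; first by apply/M_eq_sym/M_mul1.
by apply: M_eq_trans (M_eq_mulr _ IH) _; apply/M_eq_sym/M_mulA.
Qed.

Section Equivariance.
Variable img : nat -> seq letter.
Hypothesis img_lt : forall j, (j < m + n)%N -> all (letter_lt (m + n)) (img j).
Variable phi : P -> P.
Hypothesis phiM : {morph phi : p q / P_mul p q}.
Hypothesis phi1 : phi (P_one m n) = P_one m n.
Hypothesis rhoW_subst_letter : forall a, (a.1 < m + n)%N ->
  M_eq (rhoW (subst_letter img a)) (M_map phi (rho_letter a)).

Lemma rhoW_substW w : all (letter_lt (m + n)) w ->
  M_eq (rhoW (substW img w)) (M_map phi (rhoW w)).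
Proof.
elim: w => [|a w IH] /=; first by rewrite /M_map /= phi1 => _; apply: M_eq_refl.
move=> /andP [an wn]; rewrite substW_cons M_map_mul //.
apply: M_eq_trans (rhoW_cat _ _) _; apply: M_eq_trans (M_eq_mulr _ (IH wn)) _.
exact: M_eq_mull (rhoW_subst_letter an).
Qed.

Lemma rho_substFG x : M_eq (rho (substFG img x)) (M_map phi (rho x)).
Proof.
have xn : all (letter_lt (m + n)) (fgw x) by rewrite reduced_letter_lt ?fgP.
apply: M_eq_trans (rhoW_normW _) _; first exact: substW_lt.
exact: rhoW_substW.
Qed.

End Equivariance.
End RhoWords.

Lemma sigma_img_lt N s j : (s.1.+1 < N)%N -> (j < N)%N -> all (letter_lt N) (sigma_img s j).
Proof.
move=> sN jN; have s1N := ltnW sN.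
by rewrite /sigma_img; case: s.2 => /=; repeat case: ifP => _ /=; rewrite ?s1N ?sN ?jN.
Qed.

Lemma artin_genE N s : artin_gen N s = substFG (sigma_img s).
Proof. by []. Qed.

Lemma artin_gen_letter N s b : (s.1.+1 < N)%N -> (b.1 < N)%N ->
  artin_gen N s (normFG N [:: b]) = normFG N (subst_letter (sigma_img s) b).
Proof.
move=> sN bN; apply: fgw_inj.
have img_lt j : (j < N)%N -> all (letter_lt N) (sigma_img s j) by apply: sigma_img_lt.
rewrite [LHS](fgw_substFG img_lt) fgw_normFG1 // substW_cons cats0 /= normW_pushs //.
exact: subst_letter_lt.
Qed.

Lemma subst_letter_sigma_id s a : a.1 != s.1 -> a.1 != s.1.+1 ->
  subst_letter (sigma_img s) a = [:: a].
Proof.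
move=> /negbTE as1 /negbTE as2.
by case: a as1 as2 => i [] /= as1 as2; rewrite /subst_letter /sigma_img /= as1 as2; case: s.2.
Qed.

Lemma subst_letter_sigma_shift m s b :
  subst_letter (sigma_img ((m + s.1)%N, s.2)) (shift_letter m b)
  = map (shift_letter m) (subst_letter (sigma_img s) b).
Proof.
have sigma_shift j : sigma_img ((m + s.1)%N, s.2) (m + j)%N
    = map (shift_letter m) (sigma_img s j).
  rewrite /sigma_img /= eqn_add2l -addnS eqn_add2l.
  by case: s.2 => /=; repeat case: ifP => _ /=.
rewrite /subst_letter /shift_letter /= sigma_shift.
by case: b.2; rewrite // /invW map_rev -!map_comp.
Qed.

Section TensorBraid.
Variables m n : nat.
Local Notation P := (P m n).

Lemma rho_artin_gen_low s x : (s.1.+1 < m)%N ->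
  M_eq (rho (artin_gen (m + n) s x)) (M_map (fun p : P => (artin_gen m s p.1, p.2)) (rho x)).
Proof.
move=> sm; have smn : (s.1.+1 < m + n)%N := leq_trans sm (leq_addr n m).
have img_lt j : (j < m)%N -> all (letter_lt m) (sigma_img s j) by apply: sigma_img_lt.
apply: rho_substFG => [j|p q|//|a amn]; first exact: sigma_img_lt.
  by rewrite /P_mul /= !artin_genE substFG_mul.
have [am|ma] := ltnP a.1 m.
  rewrite rho_letter_low //.
  change (M_eq (rhoW m n (subst_letter (sigma_img s) a)) (rhoF n (artin_gen m s (normFG m [:: a])))).
  by rewrite artin_gen_letter //; apply/rhoW_low/subst_letter_lt.
rewrite subst_letter_sigma_id ?neq_ltn ?(leq_trans sm ma) ?(leq_trans (ltnW sm) ma) ?orbT //.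
rewrite rho_letter_high //.
change (M_eq (rhoW m n [:: a]) (rhoG m (normFG n [:: (a.1 - m, a.2)%N]))).
have := @rhoW_high m n [:: (a.1 - m, a.2)%N].
rewrite /= /shift_letter /= subnKC // -surjective_pairing; apply.
by rewrite andbT ltn_subLR.
Qed.

Lemma rho_artin_gen_high s x : (s.1.+1 < n)%N ->
  M_eq (rho (artin_gen (m + n) ((m + s.1)%N, s.2) x))
       (M_map (fun p : P => (p.1, artin_gen n s p.2)) (rho x)).
Proof.
move=> sn; have img_lt j : (j < n)%N -> all (letter_lt n) (sigma_img s j).
  exact: sigma_img_lt.
apply: rho_substFG => [j|p q|//|a amn].
- by apply: sigma_img_lt; rewrite /= -addnS ltn_add2l.
- by rewrite /P_mul /= !artin_genE substFG_mul.
have [am|ma] := ltnP a.1 m.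
  have am1 : (a.1 < m + s.1)%N := leq_trans am (leq_addr _ _).
  have am2 : (a.1 < (m + s.1).+1)%N := ltnW am1.
  rewrite subst_letter_sigma_id ?neq_ltn ?am1 ?am2 // rho_letter_low //.
  by apply: rhoW_low; rewrite /= am.
have -> : a = shift_letter m (a.1 - m, a.2)%N by rewrite /shift_letter /= subnKC // -surjective_pairing.
set b := (a.1 - m, a.2)%N; have bn : (b.1 < n)%N by rewrite /= ltn_subLR.
rewrite subst_letter_sigma_shift rho_letter_high /shift_letter /= ?leq_addr // addKn -/b.
change (M_eq (rhoW m n (map (shift_letter m) (subst_letter (sigma_img s) b)))
             (rhoG m (artin_gen n s (normFG n [:: b])))).
by rewrite artin_gen_letter //; apply/rhoW_high/subst_letter_lt.
Qed.

Lemma artin_cat N a b x : artin N (a ++ b) x = artin N a (artin N b x).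
Proof. by elim: a => [|s a IH] //=; rewrite IH. Qed.

Lemma rho_artin_low alpha x : braid_word m alpha ->
  M_eq (rho (artin (m + n) alpha x)) (M_map (fun p : P => (artin m alpha p.1, p.2)) (rho x)).
Proof.
elim: alpha => [|s a IH] /=; first by rewrite M_map_id //; case.
case/andP=> sm am; apply: M_eq_trans (rho_artin_gen_low _ sm) _.
by apply: M_eq_trans (M_eq_map _ (IH am)) _; rewrite M_map_comp.
Qed.

Lemma rho_artin_high beta x : braid_word n beta ->
  M_eq (rho (artin (m + n) (map (fun s => ((m + s.1)%N, s.2)) beta) x))
       (M_map (fun p : P => (p.1, artin n beta p.2)) (rho x)).
Proof.
elim: beta => [|s b IH] /=; first by rewrite M_map_id //; case.
case/andP=> sn bn; apply: M_eq_trans (rho_artin_gen_high _ sn) _.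
by apply: M_eq_trans (M_eq_map _ (IH bn)) _; rewrite M_map_comp.
Qed.

Lemma rho_artin_tensor alpha beta x : braid_word m alpha -> braid_word n beta ->
  M_eq (rho (artin (m + n) (braid_tensor m alpha beta) x))
       (M_map (fun p : P => (artin m alpha p.1, artin n beta p.2)) (rho x)).
Proof.
move=> ha hb; rewrite /braid_tensor artin_cat.
apply: M_eq_trans (rho_artin_low _ ha) _.
by apply: M_eq_trans (M_eq_map _ (rho_artin_high _ hb)) _; rewrite M_map_comp.
Qed.

End TensorBraid.

Lemma preserves_inj (T : eqType) (mul : T -> T -> T) lt (phi : T -> T) :
  bi_ordering mul lt -> preserves phi lt -> injective phi.
Proof.
move=> [irr _ tot _] pres x y e; apply/eqP/negPn/negP => /eqP /tot.
by case=> /pres; rewrite e => /irr.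
Qed.

Section Positivity.
Variables (m n : nat) (ltF : FG m -> FG m -> Prop) (ltG : FG n -> FG n -> Prop).
Local Notation P := (P m n).

Lemma preserves_lexlt phiF phiG : injective phiF ->
  preserves phiF ltF -> preserves phiG ltG ->
  preserves (fun p : P => (phiF p.1, phiG p.2)) (lexlt ltF ltG).
Proof.
move=> injF pF pG [p1 p2] [q1 q2]; rewrite /lexlt /=.
split=> -[h|[e h]].
- by left; apply/(pF p1 q1).
- by right; split; [rewrite e | apply/(pG p2 q2)].
- by left; apply/(pF p1 q1).
- by right; split; [apply: injF | apply/(pG p2 q2)].
Qed.

Lemma R_transport (r r' : P -> int) (Phi : P -> P) :
  (forall h, r' (Phi h) = r h) -> (forall g, (forall h, Phi h <> g) -> r' g = 0) ->
  preserves Phi (lexlt ltF ltG) ->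
  (R_zero r <-> R_zero r') /\ (R_pos ltF ltG r <-> R_pos ltF ltG r').
Proof.
move=> r'Phi r'out lexPhi.
have image_or_zero g : (exists h, Phi h = g) \/ r' g = 0.
  case: (classic (exists h, Phi h = g)) => [|nh]; [left | right] => //.
  by apply: r'out => h eh; apply: nh; exists h.
split; split.
- by move=> z g; case: (image_or_zero g) => [[h <-]|//]; rewrite r'Phi z.
- by move=> z h; rewrite -r'Phi z.
- move=> [g [pg hg]]; exists (Phi g); rewrite r'Phi; split => // h' gh'.
  case: (image_or_zero h') => [[h eh]|//].
  by rewrite -eh r'Phi; apply/hg/(lexPhi g h); rewrite eh.
- move=> [g' [pg hg]]; case: (image_or_zero g') => [[g eg]|g'0]; last by rewrite g'0 in pg.
  exists g; rewrite -r'Phi eg; split => // h gh.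
  by rewrite -r'Phi; apply: hg; rewrite -eg; apply/(lexPhi g h).
Qed.

Lemma M_pos_imp ofs (D D' : MT m n) :
  (forall k i j, R_zero (mcoef D k i j) -> R_zero (mcoef D' k i j)) ->
  (forall k i j, R_pos ltF ltG (mcoef D k i j) -> R_pos ltF ltG (mcoef D' k i j)) ->
  M_pos ltF ltG ofs D -> M_pos ltF ltG ofs D'.
Proof.
move=> hz hp [k [hlt hE]]; exists k; split=> [k' lk i j|]; first exact/hz/hlt.
case: hE => [a|[a b]|[a b c]|[a b c d]].
- exact/Or41/hp.
- by apply: Or42; split; [apply: hz | apply: hp].
- by apply: Or43; split; [apply: hz | apply: hz | apply: hp].
- by apply: Or44; split; [apply: hz | apply: hz | apply: hz | apply: hp].
Qed.

Lemma M_pos_transport ofs (D D' : MT m n) (Phi : P -> P) :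
  preserves Phi (lexlt ltF ltG) ->
  (forall k i j h, mcoef D' k i j (Phi h) = mcoef D k i j h) ->
  (forall k i j g, (forall h, Phi h <> g) -> mcoef D' k i j g = 0) ->
  M_pos ltF ltG ofs D <-> M_pos ltF ltG ofs D'.
Proof.
move=> lexPhi D'Phi D'out.
have t k i j := R_transport (D'Phi k i j) (D'out k i j) lexPhi.
by split; apply: M_pos_imp => k i j; case: (t k i j) => [[? ?] [? ?]].
Qed.

Lemma M_pos_M_eq ofs (D D' : MT m n) : M_eq D D' ->
  M_pos ltF ltG ofs D <-> M_pos ltF ltG ofs D'.
Proof.
move=> e; apply: (@M_pos_transport ofs D D' id) => // [k i j h|k i j g /(_ g) //].
by rewrite !mcoefE e.
Qed.

Lemma M_pos_map ofs (D : MT m n) (Phi : P -> P) : injective Phi ->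
  preserves Phi (lexlt ltF ltG) ->
  M_pos ltF ltG ofs D <-> M_pos ltF ltG ofs (M_map Phi D).
Proof.
move=> inj lexPhi; apply: M_pos_transport => // [k i j h|k i j g gout].
  rewrite !mcoefE /M_coef big_map; apply: eq_bigr => x _.
  by rewrite /mkey_of /= [in LHS]xpair_eqE [in RHS]xpair_eqE /= (inj_eq inj).
rewrite mcoefE /M_coef big_map big1 // => x _.
by case: ifP => // /eqP /(congr1 snd) /= e; case: (gout x.1.1.1.2).
Qed.

End Positivity.

Theorem proposition6p2 (m n : nat)
    (ltF : FG m -> FG m -> Prop) (ltG : FG n -> FG n -> Prop)
    (alpha beta : seq (nat * bool)) (ofs : bool) :
  braid_word m alpha -> braid_word n beta ->
  bi_ordering (@fg_mul m) ltF -> bi_ordering (@fg_mul n) ltG ->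
  preserves (artin m alpha) ltF -> preserves (artin n beta) ltG ->
  preserves (artin (m + n) (braid_tensor m alpha beta)) (prec ltF ltG ofs).
Proof.
move=> ha hb oF oG pF pG x y.
set Phi := fun p : P m n => (artin m alpha p.1, artin n beta p.2).
have injF := preserves_inj oF pF; have injG := preserves_inj oG pG.
have injPhi : injective Phi by move=> [p1 p2] [q1 q2] [/injF -> /injG ->].
rewrite /prec (M_pos_map ofs _ injPhi (preserves_lexlt injF pF pG)) M_map_sub.
by apply/M_pos_M_eq/M_eq_sub; apply/M_eq_sym/rho_artin_tensor.
Qed.
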